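(* Let $h$ be a ternary cubic form whose Hessian $H(h)$ is defined (not identically zero). If $f$ and $g$ are two cubic forms in the pencil $\langle h, H(h)\rangle$ spanned by $h$ and its Hessian, then $R(f,g,-)=0$, i.e. $R(f,g,c)=0$ for every cubic form $c$.
   Context: Let $R\in\bigwedge^3(\mathrm{Sym}^3\mathbb{C}^3)^*$ be the alternating trilinear form on the space $\mathrm{Sym}^3\mathbb{C}^3$ of ternary cubic forms determined by $R(l^3,m^3,n^3)=(\det(l,m,n))^3$ for linear forms $l,m,n$ in $x,y,z$, where $\det(l,m,n)$ is the determinant of the $3\times3$ matrix of their coefficients. The Hessian of a cubic $h$ is $H(h)=\det(\partial^2h/\partial x_i\partial x_j)$. *)

From HB Require Import structures.
From mathcomp Require Import all_boot all_order all_algebra.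
From mathcomp Require Import complex.
From mathcomp Require Import Rstruct.
From mathcomp Require Import mpoly.
Set Implicit Arguments. Unset Strict Implicit. Unset Printing Implicit Defensive.
Import Order.TTheory GRing.Theory Num.Theory.
Local Open Scope ring_scope.

Definition CC : Type := complex Rdefinitions.R.

Notation poly3 := {mpoly CC[3]}.

(* Ternary cubic forms: homogeneous polynomials of degree 3 (including 0). *)
Definition is_cubic (p : poly3) : Prop := p \is 3.-homog.

Definition linform (v : 'I_3 -> CC) : poly3 := \sum_(i < 3) v i *: 'X_i.

Definition det3 (l m n : 'I_3 -> CC) : CC :=
  \det (\matrix_(i < 3, j < 3)
          (if i == 0 :> nat then l j else if i == 1 :> nat then m j else n j)).

Definition hessian (h : poly3) : poly3 :=
  \det (\matrix_(i < 3, j < 3) mderiv i (mderiv j h)).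

From HB Require Import structures.
From mathcomp Require Import all_boot all_order all_algebra.
From mathcomp Require Import complex Rstruct mpoly.
From mathcomp Require Import ring zify.
Import Order.TTheory GRing.Theory Num.Theory.
Local Open Scope ring_scope.

(* For f = a h + b H(h) and g = a' h + b' H(h), trilinearity and alternation give
   R(f, g, c) = (a b' - a' b) R(h, H(h), c), so it suffices that R(h, H(h), -) = 0.
   Every cubic is a combination of the ten cubes l^3 with l among x, y, z, x +- y,
   x +- z, y +- z, x + y + z, so R(h, H(h), n^3) is determined by
   R(l^3, m^3, n^3) = det(l, m, n)^3 and the explicit Hessian of the general ternary
   cubic; it turns out to be identically zero as a polynomial in the coefficients of
   h and n. *)

Definition linear_on {K : nzRingType} {V : lmodType K} (S : {pred V}) (phi : V -> K) :=
  forall a f f', f \in S -> f' \in S -> phi (a *: f + f') = a * phi f + phi f'.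

Section LinearOn.

Context {K : nzRingType} {V : lmodType K} {S : submodClosed V} {phi : V -> K}.
Hypothesis phiL : linear_on S phi.

Lemma linear_on0 : phi 0 = 0.
Proof.
have := phiL 1 0 0 (rpred0 S) (rpred0 S).
by rewrite scaler0 addr0 mul1r => E; apply: (addrI (phi 0)); rewrite addr0 -E.
Qed.

Lemma linear_onZ a f : f \in S -> phi (a *: f) = a * phi f.
Proof. by move=> Sf; rewrite -[a *: f]addr0 phiL ?rpred0 // linear_on0 addr0. Qed.

Lemma linear_onD f f' : f \in S -> f' \in S -> phi (f + f') = phi f + phi f'.
Proof. by move=> Sf Sf'; have := phiL 1 f f' Sf Sf'; rewrite scale1r mul1r. Qed.

Lemma linear_on_sum {I : Type} {r : seq I} {w : I -> K} {F : I -> V} :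
  (forall i, F i \in S) -> phi (\sum_(i <- r) w i *: F i) = \sum_(i <- r) w i * phi (F i).
Proof.
move=> SF; elim: r => [|i r IHr]; first by rewrite !big_nil linear_on0.
by rewrite !big_cons phiL ?IHr // rpred_sum // => j _; rewrite rpredZ.
Qed.

End LinearOn.

Section AlternatingTrilinear.

Context {K : comNzRingType} {V : lmodType K} (S : submodClosed V) {R : V -> V -> V -> K}.
Hypothesis R_lin1 : forall a f f' g c, f \in S -> f' \in S -> g \in S -> c \in S ->
  R (a *: f + f') g c = a * R f g c + R f' g c.
Hypothesis R_lin2 : forall a f g g' c, f \in S -> g \in S -> g' \in S -> c \in S ->
  R f (a *: g + g') c = a * R f g c + R f g' c.
Hypothesis R_lin3 : forall a f g c c', f \in S -> g \in S -> c \in S -> c' \in S ->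
  R f g (a *: c + c') = a * R f g c + R f g c'.
Hypothesis R_alt : forall f g c, f \in S -> g \in S -> c \in S ->
  (f = g \/ g = c \/ f = c) -> R f g c = 0.

Lemma R_linearl {g c} : g \in S -> c \in S -> linear_on S (fun f => R f g c).
Proof. by move=> Sg Sc a f f' Sf Sf'; apply: R_lin1. Qed.

Lemma R_linearm {f c} : f \in S -> c \in S -> linear_on S (fun g => R f g c).
Proof. by move=> Sf Sc a g g' Sg Sg'; apply: R_lin2. Qed.

Lemma R_linearr {f g} : f \in S -> g \in S -> linear_on S (R f g).
Proof. by move=> Sf Sg a c c' Sc Sc'; apply: R_lin3. Qed.

Lemma R_diag {f c} : f \in S -> c \in S -> R f f c = 0.
Proof. by move=> Sf Sc; apply: R_alt => //; left. Qed.

Lemma R_swap {f g c} : f \in S -> g \in S -> c \in S -> R g f c = - R f g c.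
Proof.
move=> Sf Sg Sc; have Sfg := rpredD Sf Sg.
have := R_diag Sfg Sc; rewrite (linear_onD (R_linearl Sfg Sc)) //.
rewrite !(linear_onD (R_linearm _ Sc)) // !R_diag // add0r addr0.
by move/eqP; rewrite addr_eq0 => /eqP ->; rewrite opprK.
Qed.

Lemma R_pencil a b a' b' {u w c} : u \in S -> w \in S -> c \in S ->
  R (a *: u + b *: w) (a' *: u + b' *: w) c = (a * b' - a' * b) * R u w c.
Proof.
move=> Su Sw Sc; have Sv : a' *: u + b' *: w \in S by rewrite rpredD ?rpredZ.
rewrite (linear_onD (R_linearl Sv Sc)) ?rpredZ // !(linear_onZ (R_linearl Sv Sc)) //.
rewrite !(linear_onD (R_linearm _ Sc)) ?rpredZ // !(linear_onZ (R_linearm _ Sc)) //.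
by rewrite (R_swap Su Sw Sc) !R_diag //; ring.
Qed.

End AlternatingTrilinear.

Lemma mpolyE_subset {n : nat} {K : nzRingType} (s : seq 'X_{1..n}) (p : {mpoly K[n]}) :
  uniq s -> {subset msupp p <= s} -> p = \sum_(m <- s) p@_m *: 'X_[m].
Proof.
move=> s_uniq supp_s; rewrite {1}[p]mpolyE.
rewrite (perm_big [seq m <- s | m \in msupp p]); last first.
  apply: uniq_perm; [exact: msupp_uniq | exact: filter_uniq |].
  by move=> m; rewrite mem_filter; case: (boolP (m \in msupp p)) => // /supp_s ->.
rewrite big_filter big_mkcond /=; apply: eq_bigr => m _.
by case: ifPn => // /memN_msupp_eq0 ->; rewrite scale0r.
Qed.

Lemma mderivXU {n : nat} {K : nzRingType} (i j : 'I_n) :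
  mderiv i ('X_j : {mpoly K[n]}) = (j == i)%:R.
Proof.
rewrite mderivX mnm1E; case: eqP => [->|_]; last by rewrite scale0r.
have -> : (U_(i) - U_(i) = 0 :> 'X_{1..n})%MM by apply/mnmP => k; rewrite !mnmE subnn.
by rewrite mpolyX0 scale1r.
Qed.

Lemma mderiv1 {n : nat} {K : nzRingType} (i : 'I_n) : mderiv i (1 : {mpoly K[n]}) = 0.
Proof. by rewrite -mpolyC1 mderivC. Qed.

Lemma mderiv_exp {n : nat} {K : comNzRingType} (i : 'I_n) (p : {mpoly K[n]}) k :
  mderiv i (p ^+ k) = mderiv i p * p ^+ k.-1 *+ k.
Proof.
case: k => [|k /=]; first by rewrite expr0 mderiv1 mulr0n.
elim: k => [|k IHk]; first by rewrite expr0 expr1 mulr1 mulr1n.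
by rewrite exprS mderivM IHk mulrnAr mulrCA -exprS -mulrS.
Qed.

Lemma det_mx33 (K : comNzRingType) (A : 'M[K]_3) : \det A =
    A 0 0 * A 1 1 * A 2 2 + A 0 1 * A 1 2 * A 2 0 + A 0 2 * A 1 0 * A 2 1
  - A 0 2 * A 1 1 * A 2 0 - A 0 0 * A 1 2 * A 2 1 - A 0 1 * A 1 0 * A 2 2.
Proof.
rewrite (expand_det_row _ 0) !big_ord_recl big_ord0 /cofactor.
rewrite !(expand_det_row _ 0) !big_ord_recl !big_ord0 /cofactor !det_mx11 !mxE /=.
pose a (i j : nat) := A (inord i) (inord j).
have aE (i j : 'I_3) : A i j = a i j by rewrite /a !inord_val.
by rewrite !aE /=; ring.
Qed.

Definition mnm3 (i j k : nat) : 'X_{1..3} := (U_(0%R) *+ i + U_(1%R) *+ j + U_(2%R) *+ k)%MM.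
Arguments mnm3 i%_N j%_N k%_N.

Lemma mnm3_coord (m : 'X_{1..3}) : m = mnm3 (m 0) (m 1) (m 2).
Proof.
apply/mnmP => i; rewrite !mnmDE !mulmnE !mnm1E.
by case: i => -[|[|[|//]]] ? /=; rewrite !mul1n !mul0n ?addn0 ?add0n; f_equal; apply: val_inj.
Qed.

Lemma eq_mnm3 i j k i' j' k' :
  (mnm3 i j k == mnm3 i' j' k') = [&& i == i', j == j' & k == k'].
Proof.
apply/eqP/and3P => [E|[/eqP-> /eqP-> /eqP->]] //.
have coord l : mnm3 i j k l = mnm3 i' j' k' l by rewrite E.
move: (coord 0) (coord 1) (coord 2).
by rewrite !mnmDE !mulmnE !mnm1E /= !mul1n !mul0n !addn0 !add0n => -> -> ->.
Qed.

Lemma mdeg_mnm3 i j k : mdeg (mnm3 i j k) = (i + j + k)%N.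
Proof. by rewrite !mdegD !mdegMn !mdeg1 !mul1n. Qed.

Lemma mpolyX_mnm3 i j k : 'X_[mnm3 i j k] = 'X_0 ^+ i * 'X_1 ^+ j * 'X_2 ^+ k :> poly3.
Proof. by rewrite !mpolyXD !mpolyXn. Qed.

Definition cubic_mnms : seq 'X_{1..3} :=
  [:: mnm3 3 0 0; mnm3 0 3 0; mnm3 0 0 3; mnm3 2 1 0; mnm3 2 0 1;
      mnm3 1 2 0; mnm3 0 2 1; mnm3 1 0 2; mnm3 0 1 2; mnm3 1 1 1].

Lemma cubic_mnms_uniq : uniq cubic_mnms.
Proof. by rewrite /= !inE !eq_mnm3. Qed.

Lemma mem_cubic_mnms m : mdeg m = 3%N -> m \in cubic_mnms.
Proof.
rewrite [m]mnm3_coord mdeg_mnm3.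
move: (m 0) (m 1) (m 2) => [|[|[|[|i]]]] [|[|[|[|j]]]] [|[|[|[|k]]]] deg3;
  rewrite !inE !eq_mnm3 //; lia.
Qed.

Definition cubics : submodClosed poly3 :=
  GRing.SubmodClosed.clone _ _ (@ishomog1_pred 3 CC 3 mdeg) _.

Variant cubic_coef (K : Type) := CubicCoef of K & K & K & K & K & K & K & K & K & K.
Arguments CubicCoef {K}.

Definition cubic (a : cubic_coef CC) : poly3 :=
  let: CubicCoef a300 a030 a003 a210 a201 a120 a021 a102 a012 a111 := a in
  a300 *: 'X_0 ^+ 3 + a030 *: 'X_1 ^+ 3 + a003 *: 'X_2 ^+ 3
  + a210 *: ('X_0 ^+ 2 * 'X_1) + a201 *: ('X_0 ^+ 2 * 'X_2)
  + a120 *: ('X_0 * 'X_1 ^+ 2) + a021 *: ('X_1 ^+ 2 * 'X_2)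
  + a102 *: ('X_0 * 'X_2 ^+ 2) + a012 *: ('X_1 * 'X_2 ^+ 2)
  + a111 *: ('X_0 * 'X_1 * 'X_2).

Definition coef_cubic (p : poly3) : cubic_coef CC :=
  CubicCoef p@_(mnm3 3 0 0) p@_(mnm3 0 3 0) p@_(mnm3 0 0 3) p@_(mnm3 2 1 0)
    p@_(mnm3 2 0 1) p@_(mnm3 1 2 0) p@_(mnm3 0 2 1) p@_(mnm3 1 0 2)
    p@_(mnm3 0 1 2) p@_(mnm3 1 1 1).

Lemma cubic_mnmE a300 a030 a003 a210 a201 a120 a021 a102 a012 a111 :
  cubic (CubicCoef a300 a030 a003 a210 a201 a120 a021 a102 a012 a111) =
  a300 *: 'X_[mnm3 3 0 0] + a030 *: 'X_[mnm3 0 3 0] + a003 *: 'X_[mnm3 0 0 3]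
  + a210 *: 'X_[mnm3 2 1 0] + a201 *: 'X_[mnm3 2 0 1] + a120 *: 'X_[mnm3 1 2 0]
  + a021 *: 'X_[mnm3 0 2 1] + a102 *: 'X_[mnm3 1 0 2] + a012 *: 'X_[mnm3 0 1 2]
  + a111 *: 'X_[mnm3 1 1 1].
Proof. by rewrite !mpolyX_mnm3 !expr0 !expr1 !mulr1 !mul1r. Qed.

Lemma coef_cubicK {p} : is_cubic p -> cubic (coef_cubic p) = p.
Proof.
move=> p_cubic; rewrite [RHS](mpolyE_subset _ _ cubic_mnms_uniq); last first.
  by move=> m /(dhomog_mf p_cubic) /mem_cubic_mnms.
by rewrite !big_cons big_nil addr0 !addrA cubic_mnmE.
Qed.

Lemma cubic_is_cubic a : is_cubic (cubic a).
Proof.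
case: a => *; rewrite cubic_mnmE /is_cubic.
by rewrite !rpredD ?rpredZ // dhomogX; apply/eqP; apply: mdeg_mnm3.
Qed.

(* [erewrite] matches syntactically; ssreflect's [rewrite] compares its instantiated
   pattern with the other derivatives up to conversion, which unfolds the polynomial
   operations and does not finish. *)
Ltac mderiv_simpl :=
  repeat (erewrite mderivD || erewrite mderivZ || erewrite mderivM
          || erewrite (@mderiv_exp 3 CC) || erewrite mderivMn || erewrite mderivXU
          || erewrite mderiv1 || erewrite expr0);
  rewrite /= -!mul_mpolyC.

Lemma mderiv_cubic a300 a030 a003 a210 a201 a120 a021 a102 a012 a111
    (h := cubic (CubicCoef a300 a030 a003 a210 a201 a120 a021 a102 a012 a111)) :
  [/\ mderiv 0 h = (3 * a300) *: 'X_0 ^+ 2 + (2 * a210) *: ('X_0 * 'X_1)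
        + (2 * a201) *: ('X_0 * 'X_2) + a120 *: 'X_1 ^+ 2 + a111 *: ('X_1 * 'X_2)
        + a102 *: 'X_2 ^+ 2,
      mderiv 1 h = a210 *: 'X_0 ^+ 2 + (2 * a120) *: ('X_0 * 'X_1)
        + a111 *: ('X_0 * 'X_2) + (3 * a030) *: 'X_1 ^+ 2 + (2 * a021) *: ('X_1 * 'X_2)
        + a012 *: 'X_2 ^+ 2
    & mderiv 2 h = a201 *: 'X_0 ^+ 2 + a111 *: ('X_0 * 'X_1)
        + (2 * a102) *: ('X_0 * 'X_2) + a021 *: 'X_1 ^+ 2 + (2 * a012) *: ('X_1 * 'X_2)
        + (3 * a003) *: 'X_2 ^+ 2].
Proof. by split; rewrite /h /cubic; mderiv_simpl; ring. Qed.

Lemma mderiv2_cubic_diag a300 a030 a003 a210 a201 a120 a021 a102 a012 a111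
    (h := cubic (CubicCoef a300 a030 a003 a210 a201 a120 a021 a102 a012 a111)) :
  [/\ mderiv 0 (mderiv 0 h) = (6 * a300) *: 'X_0 + (2 * a210) *: 'X_1 + (2 * a201) *: 'X_2,
      mderiv 1 (mderiv 1 h) = (2 * a120) *: 'X_0 + (6 * a030) *: 'X_1 + (2 * a021) *: 'X_2
    & mderiv 2 (mderiv 2 h) = (2 * a102) *: 'X_0 + (2 * a012) *: 'X_1 + (6 * a003) *: 'X_2].
Proof.
have [d0 d1 d2] := mderiv_cubic a300 a030 a003 a210 a201 a120 a021 a102 a012 a111.
by split; [rewrite d0 | rewrite d1 | rewrite d2]; mderiv_simpl; ring.
Qed.

Lemma mderiv2_cubic_mixed a300 a030 a003 a210 a201 a120 a021 a102 a012 a111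
    (h := cubic (CubicCoef a300 a030 a003 a210 a201 a120 a021 a102 a012 a111)) :
  [/\ mderiv 0 (mderiv 1 h) = (2 * a210) *: 'X_0 + (2 * a120) *: 'X_1 + a111 *: 'X_2,
      mderiv 0 (mderiv 2 h) = (2 * a201) *: 'X_0 + a111 *: 'X_1 + (2 * a102) *: 'X_2
    & mderiv 1 (mderiv 2 h) = a111 *: 'X_0 + (2 * a021) *: 'X_1 + (2 * a012) *: 'X_2].
Proof.
have [d0 d1 d2] := mderiv_cubic a300 a030 a003 a210 a201 a120 a021 a102 a012 a111.
by split; [rewrite d1 | rewrite d2 | rewrite d2]; mderiv_simpl; ring.
Qed.

Definition hessian_coef {K : comNzRingType} (a : cubic_coef K) : cubic_coef K :=
  let: CubicCoef a300 a030 a003 a210 a201 a120 a021 a102 a012 a111 := a in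
  CubicCoef
    (- 8 * a201 ^+ 2 * a120 + 8 * a210 * a201 * a111 - 8 * a210 ^+ 2 * a102
     - 6 * a300 * a111 ^+ 2 + 24 * a300 * a120 * a102)
    (8 * a120 * a021 * a111 - 8 * a120 ^+ 2 * a012 - 8 * a210 * a021 ^+ 2
     - 6 * a030 * a111 ^+ 2 + 24 * a030 * a210 * a012)
    (8 * a102 * a012 * a111 - 8 * a021 * a102 ^+ 2 - 8 * a201 * a012 ^+ 2
     - 6 * a003 * a111 ^+ 2 + 24 * a003 * a201 * a021)
    (2 * a210 * a111 ^+ 2 - 8 * a210 * a120 * a102 + 16 * a210 * a201 * a021
     - 8 * a210 ^+ 2 * a012 - 24 * a030 * a201 ^+ 2 - 24 * a300 * a021 * a111
     + 24 * a300 * a120 * a012 + 72 * a300 * a030 * a102)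
    (2 * a201 * a111 ^+ 2 - 8 * a201 * a120 * a102 - 8 * a201 ^+ 2 * a021
     + 16 * a210 * a201 * a012 - 24 * a003 * a210 ^+ 2 - 24 * a300 * a012 * a111
     + 24 * a300 * a021 * a102 + 72 * a300 * a003 * a120)
    (2 * a120 * a111 ^+ 2 - 8 * a120 ^+ 2 * a102 + 16 * a201 * a120 * a021
     - 8 * a210 * a120 * a012 - 24 * a030 * a201 * a111 + 24 * a030 * a210 * a102
     - 24 * a300 * a021 ^+ 2 + 72 * a300 * a030 * a012)
    (2 * a021 * a111 ^+ 2 + 16 * a120 * a021 * a102 - 8 * a201 * a021 ^+ 2
     - 8 * a210 * a021 * a012 - 24 * a003 * a120 ^+ 2 - 24 * a030 * a102 * a111
     + 24 * a030 * a201 * a012 + 72 * a030 * a003 * a210)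
    (2 * a102 * a111 ^+ 2 - 8 * a120 * a102 ^+ 2 - 8 * a201 * a021 * a102
     + 16 * a210 * a102 * a012 + 24 * a003 * a201 * a120 - 24 * a003 * a210 * a111
     - 24 * a300 * a012 ^+ 2 + 72 * a300 * a003 * a021)
    (2 * a012 * a111 ^+ 2 + 16 * a120 * a102 * a012 - 8 * a201 * a021 * a012
     - 8 * a210 * a012 ^+ 2 - 24 * a003 * a120 * a111 + 24 * a003 * a210 * a021
     - 24 * a030 * a102 ^+ 2 + 72 * a030 * a003 * a201)
    (2 * a111 ^+ 3 - 8 * a120 * a102 * a111 - 8 * a201 * a021 * a111
     + 24 * a201 * a120 * a012 - 8 * a210 * a012 * a111 + 24 * a210 * a021 * a102
     - 24 * a003 * a210 * a120 - 24 * a030 * a201 * a102 - 24 * a300 * a021 * a012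
     + 216 * a300 * a030 * a003).

Lemma hessian_cubic a : hessian (cubic a) = cubic (hessian_coef a).
Proof.
case: a => a300 a030 a003 a210 a201 a120 a021 a102 a012 a111.
have [d00 d11 d22] := mderiv2_cubic_diag a300 a030 a003 a210 a201 a120 a021 a102 a012 a111.
have [d01 d02 d12] := mderiv2_cubic_mixed a300 a030 a003 a210 a201 a120 a021 a102 a012 a111.
rewrite /hessian det_mx33 !mxE (mderiv_comm 0 1) (mderiv_comm 0 2) (mderiv_comm 1 2).
by rewrite d00 d11 d22 d01 d02 d12 /= -!mul_mpolyC; ring.
Qed.

Section CubeSpanning.

Context {K : comNzRingType}.

Definition det3v (d e f : K * K * K) : K :=
    d.1.1 * e.1.2 * f.2 + d.1.2 * e.2 * f.1.1 + d.2 * e.1.1 * f.1.2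
  - d.2 * e.1.2 * f.1.1 - d.1.1 * e.2 * f.1.2 - d.1.2 * e.1.1 * f.2.

Definition cube_dirs : seq (K * K * K) :=
  [:: (1, 0, 0); (0, 1, 0); (0, 0, 1); (1, 1, 0); (1, -1, 0);
      (1, 0, 1); (1, 0, -1); (0, 1, 1); (0, 1, -1); (1, 1, 1)].

Definition cube_weights (a : cubic_coef K) : seq K :=
  let: CubicCoef a300 a030 a003 a210 a201 a120 a021 a102 a012 a111 := a in
  [:: 6 * a300 - 2 * a120 - 2 * a102 + a111; 6 * a030 - 2 * a210 - 2 * a012 + a111;
      6 * a003 - 2 * a201 - 2 * a021 + a111; a210 + a120 - a111; a120 - a210;
      a201 + a102 - a111; a102 - a201; a021 + a012 - a111; a012 - a021; a111].

Definition cube_pairing (w w' : seq K) (d : K * K * K) : K :=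
  \sum_(p <- zip w cube_dirs) \sum_(q <- zip w' cube_dirs) p.1 * q.1 * det3v p.2 q.2 d ^+ 3.

Lemma cube_pairing_hessian a d :
  cube_pairing (cube_weights a) (cube_weights (hessian_coef a)) d = 0.
Proof.
case: a => a300 a030 a003 a210 a201 a120 a021 a102 a012 a111.
by case: d => [[d1 d2] d3]; rewrite /cube_pairing unlock /det3v /=; ring.
Qed.

End CubeSpanning.

Definition vec3 (d : CC * CC * CC) : 'I_3 -> CC := fun i => nth 0 [:: d.1.1; d.1.2; d.2] i.

Definition cube (d : CC * CC * CC) : poly3 := linform (vec3 d) ^+ 3.

Lemma linform_vec3 d : linform (vec3 d) = d.1.1 *: 'X_0 + d.1.2 *: 'X_1 + d.2 *: 'X_2.
Proof. by rewrite /linform !big_ord_recl big_ord0 addr0 addrA. Qed.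

Lemma det3_vec3 d e f : det3 (vec3 d) (vec3 e) (vec3 f) = det3v d e f.
Proof. by rewrite /det3 det_mx33 !mxE. Qed.

Lemma cube_is_cubic d : is_cubic (cube d).
Proof.
rewrite /is_cubic /cube linform_vec3 -[3%N]/(1 * 3)%N dhomogMn //.
by rewrite !rpredD ?rpredZ // dhomogX; apply/eqP; apply: mdeg1.
Qed.

Definition cube_comb (w : seq CC) : poly3 := \sum_(p <- zip w cube_dirs) p.1 *: cube p.2.

Lemma cube_comb_is_cubic w : is_cubic (cube_comb w).
Proof. by apply: rpred_sum => p _; apply/rpredZ/cube_is_cubic. Qed.

Lemma cubic_cube_comb a : cubic a = 6^-1 *: cube_comb (cube_weights a).
Proof.
apply: (scalerI (a := 6)); first by rewrite pnatr_eq0.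
rewrite scalerA mulfV ?pnatr_eq0 // scale1r.
case: a => a300 a030 a003 a210 a201 a120 a021 a102 a012 a111.
rewrite /cube_comb /= !big_cons big_nil /cube !linform_vec3 /= -!mul_mpolyC.
ring.
Qed.

Section CubicTrilinear.

Context {R : poly3 -> poly3 -> poly3 -> CC}.
Hypothesis R_lin1 : forall (a : CC) (f f' g c : poly3),
  is_cubic f -> is_cubic f' -> is_cubic g -> is_cubic c ->
  R (a *: f + f') g c = a * R f g c + R f' g c.
Hypothesis R_lin2 : forall (a : CC) (f g g' c : poly3),
  is_cubic f -> is_cubic g -> is_cubic g' -> is_cubic c ->
  R f (a *: g + g') c = a * R f g c + R f g' c.
Hypothesis R_lin3 : forall (a : CC) (f g c c' : poly3),
  is_cubic f -> is_cubic g -> is_cubic c -> is_cubic c' ->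
  R f g (a *: c + c') = a * R f g c + R f g c'.
Hypothesis R_cube : forall l m n : 'I_3 -> CC,
  R (linform l ^+ 3) (linform m ^+ 3) (linform n ^+ 3) = det3 l m n ^+ 3.

Lemma R_cube_comb w w' d :
  R (cube_comb w) (cube_comb w') (cube d) = cube_pairing w w' d.
Proof.
have Sd := cube_is_cubic d.
rewrite /cube_comb (linear_on_sum (R_linearl cubics R_lin1 (cube_comb_is_cubic w') Sd)
  (fun p => cube_is_cubic p.2)).
apply: eq_bigr => p _.
rewrite (linear_on_sum (R_linearm cubics R_lin2 (cube_is_cubic p.2) Sd)
  (fun q => cube_is_cubic q.2)) mulr_sumr.
by apply: eq_bigr => q _; rewrite /cube R_cube !det3_vec3 mulrA.
Qed.

Lemma R_hessian_cube a d : R (cubic a) (cubic (hessian_coef a)) (cube d) = 0.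
Proof.
have Sd := cube_is_cubic d.
have SX := cube_comb_is_cubic (cube_weights a).
have SY := cube_comb_is_cubic (cube_weights (hessian_coef a)).
rewrite !cubic_cube_comb (linear_onZ (R_linearl cubics R_lin1 (rpredZ _ SY) Sd)) //.
rewrite (linear_onZ (R_linearm cubics R_lin2 SX Sd)) //.
by rewrite R_cube_comb cube_pairing_hessian !mulr0.
Qed.

Lemma R_hessian a c : is_cubic c -> R (cubic a) (cubic (hessian_coef a)) c = 0.
Proof.
move=> c_cubic; rewrite -(coef_cubicK c_cubic) (cubic_cube_comb (coef_cubic c)).
have RL := R_linearr cubics R_lin3 (cubic_is_cubic a) (cubic_is_cubic (hessian_coef a)).
rewrite (linear_onZ RL) ?cube_comb_is_cubic //.
rewrite (linear_on_sum RL (fun p => cube_is_cubic p.2)) big1 ?mulr0 // => p _.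
by rewrite R_hessian_cube mulr0.
Qed.

End CubicTrilinear.

Theorem mainTheorem2
  (R : poly3 -> poly3 -> poly3 -> CC)
  (R_lin1 : forall (a : CC) (f f' g c : poly3),
      is_cubic f -> is_cubic f' -> is_cubic g -> is_cubic c ->
      R (a *: f + f') g c = a * R f g c + R f' g c)
  (R_lin2 : forall (a : CC) (f g g' c : poly3),
      is_cubic f -> is_cubic g -> is_cubic g' -> is_cubic c ->
      R f (a *: g + g') c = a * R f g c + R f g' c)
  (R_lin3 : forall (a : CC) (f g c c' : poly3),
      is_cubic f -> is_cubic g -> is_cubic c -> is_cubic c' ->
      R f g (a *: c + c') = a * R f g c + R f g c')
  (R_alt : forall f g c : poly3,
      is_cubic f -> is_cubic g -> is_cubic c ->
      (f = g \/ g = c \/ f = c) -> R f g c = 0)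
  (R_cube : forall l m n : 'I_3 -> CC,
      R (linform l ^+ 3) (linform m ^+ 3) (linform n ^+ 3) = det3 l m n ^+ 3)
  (h : poly3) (h_cubic : is_cubic h) (hH : hessian h != 0)
  (f g : poly3)
  (hf : exists a b : CC, f = a *: h + b *: hessian h)
  (hg : exists a b : CC, g = a *: h + b *: hessian h) :
  forall c : poly3, is_cubic c -> R f g c = 0.
Proof.
move=> c c_cubic.
have hessE : hessian h = cubic (hessian_coef (coef_cubic h)).
  by rewrite -{1}(coef_cubicK h_cubic) hessian_cubic.
have H_cubic : is_cubic (hessian h) by rewrite hessE; apply: cubic_is_cubic.
have RhH : R h (hessian h) c = 0.
  by rewrite hessE -{1}(coef_cubicK h_cubic) (R_hessian R_lin1 R_lin2 R_lin3 R_cube).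
case: hf => a [b ->]; case: hg => a' [b' ->].
by rewrite (R_pencil cubics R_lin1 R_lin2 R_alt _ _ _ _ h_cubic H_cubic c_cubic) RhH mulr0.
Qed.
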